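(* Consider the LTI MIMO state-space model $$\alpha_{k+1}=T\alpha_k+Bx_k+\eta_k,\qquad y_k=Z\alpha_k+\beta x_k+\varepsilon_k,\qquad \begin{bmatrix}\eta_k\\ \varepsilon_k\end{bmatrix}\sim\mathcal N\!\left(0,\begin{bmatrix}Q&S\\ S^\top&H\end{bmatrix}\right),$$ $\alpha_0\sim\mathcal N(\bar\alpha_0,\Pi_0)$, $\Pi_0>0$, $H>0$, where the quantities $T,B,Z,\beta,Q,S,H,\bar\alpha_0,\Pi_0$ depend differentiably on a parameter vector $\theta\in\mathbb R^p$, while the observations $y_k$ and explanatory variables $x_k$ do not depend on $\theta$. For a matrix-valued function $A(\theta)$ write $\partial_iA:=\partial A/\partial\theta_i$. Let $\overline T=T-SH^{-1}Z$, $\overline B=B-SH^{-1}\beta$, $\overline Q=Q-SH^{-1}S^\top$. Algorithm 1a (UD-based LTI MIMO KF): factor $\Pi_0=\bar U_{\Pi_0}D_{\Pi_0}\bar U_{\Pi_0}^\top$, $H=\bar U_HD_H\bar U_H^\top$, $\overline Q=\bar U_{\overline Q}D_{\overline Q}\bar U_{\overline Q}^\top$; set $\hat\alpha_{0|0}=\bar\alpha_0$, $\bar U_{P_{0|0}}=\bar U_{\Pi_0}$, $D_{P_{0|0}}=D_{\Pi_0}$; for $k=1,\dots,N$: $\hat\alpha_{k|k-1}=\overline T\hat\alpha_{k-1|k-1}+\overline Bx_{k-1}+SH^{-1}y_{k-1}$; MWGS on $\mathbb A^\top=[\overline T\bar U_{P_{k-1|k-1}}\ \bar U_{\overline Q}]$,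 $\mathbb D_A=D_{P_{k-1|k-1}}\oplus D_{\overline Q}$ gives $\mathbb R=\bar U_{P_{k|k-1}}$, $\mathbb D_R=D_{P_{k|k-1}}$ (time update); MWGS on $\mathbb A^\top=\begin{bmatrix}\bar U_{P_{k|k-1}}&0\\ Z\bar U_{P_{k|k-1}}&\bar U_H\end{bmatrix}$, $\mathbb D_A=D_{P_{k|k-1}}\oplus D_H$ gives $\mathbb R=\begin{bmatrix}\bar U_{P_{k|k}}&\bar K_k^u\\0&\bar U_{R_{e,k}}\end{bmatrix}$, $\mathbb D_R=D_{P_{k|k}}\oplus D_{R_{e,k}}$ (measurement update); $e_k=y_k-Z\hat\alpha_{k|k-1}-\beta x_k$, $\bar e_k=\bar U_{R_{e,k}}^{-1}e_k$, $\hat\alpha_{k|k}=\hat\alpha_{k|k-1}+\bar K_k^u\bar e_k$. Algorithm 1b (differentiated UD-based LTI MIMO KF): for each $i=1,\dots,p$, in addition to running Algorithm 1a, it initializes with $\partial_i\bar U_{P_{0|0}}=\partial_i\bar U_{\Pi_0}$, $\partial_iD_{P_{0|0}}=\partial_iD_{\Pi_0}$, $\partial_i\hat\alpha_{0|0}=\partial_i\bar\alpha_0$ (using $\partial_i\overline T,\partial_i\overline B,\partial_i\overline Q$ and the derivatives of the factors of $\overline Q$ and $H$), and for $k=1,\dots,N$ computes: (a) $\partial_i\hat\alpha_{k|k-1}=(\partial_i\overline T)\hat\alpha_{k-1|k-1}+\overline T\,\partial_i\hat\alpha_{k-1|k-1}+(\partial_i\overline B)x_{k-1}+(\partial_iS)H^{-1}y_{k-1}-SH^{-1}(\partial_iH)H^{-1}y_{k-1}$;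 (b) in both the time and the measurement update, forms the pre-arrays $\mathbb A,\mathbb D_A$ of Algorithm 1a and their derivatives $\partial_i\mathbb A,\partial_i\mathbb D_A$, applies the Diff. UD scheme below to obtain $\mathbb R,\mathbb D_R,\partial_i\mathbb R,\partial_i\mathbb D_R$, and reads off the blocks $\partial_i\bar U_{P_{k|k-1}},\partial_iD_{P_{k|k-1}},\partial_i\bar U_{P_{k|k}},\partial_iD_{P_{k|k}},\partial_i\bar U_{R_{e,k}},\partial_iD_{R_{e,k}},\partial_i\bar K_k^u$ from the same positions as the corresponding undifferentiated blocks; (c) $\partial_i\bar e_k=-\bar U_{R_{e,k}}^{-1}(\partial_i\bar U_{R_{e,k}})\bar U_{R_{e,k}}^{-1}e_k-\bar U_{R_{e,k}}^{-1}\big[(\partial_iZ)\hat\alpha_{k|k-1}+Z\,\partial_i\hat\alpha_{k|k-1}+(\partial_i\beta)x_k\big]$; (d) $\partial_i\hat\alpha_{k|k}=\partial_i\hat\alpha_{k|k-1}+(\partial_i\bar K_k^u)\bar e_k+\bar K_k^u\,\partial_i\bar e_k$. Diff. UD scheme with inputs $\mathbb A,\mathbb D_A,\partial_i\mathbb A,\partial_i\mathbb D_A$: apply MWGS to obtain $\mathfrak W,\mathbb R,\mathbb D_R$; set $M_0=\mathfrak W^\top\mathbb D_A(\partial_i\mathbb A)\mathbb R^{-\top}$ and split $M_0=\bar L_0+D_0+\bar U_0$ into strictly lower triangular, diagonal and strictly upper triangular parts; set $M_2=\mathfrak W^\top(\partial_i\mathbb D_A)\mathfrak W$ and split $M_2=\bar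 L_2+D_2+\bar U_2$ likewise; output $\partial_i\mathbb R=\mathbb R(\bar L_0^\top+\bar U_0+\bar U_2)\mathbb D_R^{-1}$ and $\partial_i\mathbb D_R=2D_0+D_2$. Then Algorithm 1b computes the filter sensitivities of Algorithm 1a correctly: for every $k$ and $i$, the quantities it produces as $\partial_i\hat\alpha_{k|k-1}$, $\partial_i\bar U_{P_{k|k-1}}$, $\partial_iD_{P_{k|k-1}}$, $\partial_i\bar U_{P_{k|k}}$, $\partial_iD_{P_{k|k}}$, $\partial_i\bar U_{R_{e,k}}$, $\partial_iD_{R_{e,k}}$, $\partial_i\bar K_k^u$, $\partial_i\bar e_k$, $\partial_i\hat\alpha_{k|k}$ equal the partial derivatives with respect to $\theta_i$ of the corresponding quantities computed by Algorithm 1a, regarded as functions of $\theta$.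
   Context: $UDU^\top$ factorization: $P=\bar U_PD_P\bar U_P^\top$ with $\bar U_P$ unit upper triangular and $D_P$ diagonal. $A\oplus B:=\mathrm{diag}\{A,B\}$. MWGS: given $\mathbb A\in\mathbb R^{r\times s}$ ($r\ge s$) and diagonal $\mathbb D_A>0$, it returns the matrix $\mathfrak W\in\mathbb R^{r\times s}$, a unit upper triangular $\mathbb R\in\mathbb R^{s\times s}$ and a diagonal $\mathbb D_R\in\mathbb R^{s\times s}$ with $\mathbb A^\top=\mathbb R\mathfrak W^\top$ and $\mathfrak W^\top\mathbb D_A\mathfrak W=\mathbb D_R$. It is assumed that every MWGS call is well defined (pre-arrays as required, with $\mathbb D_R$ invertible) and that all quantities involved are differentiable in $\theta$. *)

From HB Require Import structures.
From mathcomp Require Import all_boot all_order all_algebra.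
From mathcomp Require Import all_classical all_reals all_analysis.

Set Implicit Arguments.
Unset Strict Implicit.
Unset Printing Implicit Defensive.

Import Order.TTheory GRing.Theory Num.Theory.
Import numFieldNormedType.Exports.
Local Open Scope ring_scope.

Section MxNotions.
Variable R : realType.

Definition unit_upper s (U : 'M[R]_s) : Prop :=
  (forall i j : 'I_s, (j < i)%N -> U i j = 0) /\ (forall i : 'I_s, U i i = 1).

Definition posdef s (P : 'M[R]_s) : Prop :=
  P^T = P /\ forall v : 'cV[R]_s, v != 0 -> 0 < (v^T *m P *m v) 0 0.

Definition udu_factor s (P U D : 'M[R]_s) : Prop :=
  unit_upper U /\ is_diag_mx D /\ P = U *m D *m U^T.

Definition mwgs_spec r s (A : 'M[R]_(r, s)) (DA : 'M[R]_r)
    (W : 'M[R]_(r, s)) (Rm DR : 'M[R]_s) : Prop :=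
  [/\ (s <= r)%N, is_diag_mx DA & (forall j : 'I_r, 0 < DA j j)] /\
  [/\ A^T = Rm *m W^T, W^T *m DA *m W = DR, unit_upper Rm,
      is_diag_mx DR & DR \in unitmx].

Definition slow s (M : 'M[R]_s) : 'M[R]_s :=
  \matrix_(i, j) (if (j < i)%N then M i j else 0).
Definition dgl s (M : 'M[R]_s) : 'M[R]_s :=
  \matrix_(i, j) (if i == j then M i j else 0).
Definition supp s (M : 'M[R]_s) : 'M[R]_s :=
  \matrix_(i, j) (if (i < j)%N then M i j else 0).

(* Diff. UD scheme (W, R, D_R are the MWGS outputs on (A, D_A)) *)
Definition diffUD r s (W : 'M[R]_(r, s)) (Rm DR : 'M[R]_s) (DA : 'M[R]_r)
    (dA : 'M[R]_(r, s)) (dDA : 'M[R]_r) : 'M[R]_s * 'M[R]_s :=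
  let M0 := W^T *m DA *m dA *m invmx Rm^T in
  let M2 := W^T *m dDA *m W in
  (Rm *m ((slow M0)^T + supp M0 + supp M2) *m invmx DR,
   (dgl M0) *+ 2 + dgl M2).

Definition pd p a b (i : 'I_p) (f : 'rV[R]_p -> 'M[R]_(a, b))
    (th : 'rV[R]_p) : 'M[R]_(a, b) :=
  'D_(delta_mx 0 i) f th.

End MxNotions.

(* n: state dim, d: observation dim, m: input dim, p: #parameters       *)
Record lti_model (R : realType) (n d m p : nat) := LtiModel {
  mT : 'rV[R]_p -> 'M[R]_n;
  mB : 'rV[R]_p -> 'M[R]_(n, m);
  mZ : 'rV[R]_p -> 'M[R]_(d, n);
  mbeta : 'rV[R]_p -> 'M[R]_(d, m);
  mQ : 'rV[R]_p -> 'M[R]_n;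
  mS : 'rV[R]_p -> 'M[R]_(n, d);
  mH : 'rV[R]_p -> 'M[R]_d;
  malpha0 : 'rV[R]_p -> 'cV[R]_n;
  mPi0 : 'rV[R]_p -> 'M[R]_n }.

Record ud_factors (R : realType) (n d p : nat) := UdFactors {
  UPi0 : 'rV[R]_p -> 'M[R]_n;  DPi0 : 'rV[R]_p -> 'M[R]_n;
  UH : 'rV[R]_p -> 'M[R]_d;    DH : 'rV[R]_p -> 'M[R]_d;
  UQb : 'rV[R]_p -> 'M[R]_n;   DQb : 'rV[R]_p -> 'M[R]_n }.

(* MWGS outputs of Algorithm 1a at each step k, as functions of theta *)
Record alg1a_mwgs (R : realType) (n d p : nat) := Alg1aMwgs {
  UPp : nat -> 'rV[R]_p -> 'M[R]_n;
  DPp : nat -> 'rV[R]_p -> 'M[R]_n;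
  UPf : nat -> 'rV[R]_p -> 'M[R]_n;
  DPf : nat -> 'rV[R]_p -> 'M[R]_n;
  URe : nat -> 'rV[R]_p -> 'M[R]_d;
  DRe : nat -> 'rV[R]_p -> 'M[R]_d;
  Ku  : nat -> 'rV[R]_p -> 'M[R]_(n, d);
  Wt  : nat -> 'rV[R]_p -> 'M[R]_(n + n, n);
  Wm  : nat -> 'rV[R]_p -> 'M[R]_(n + d, n + d) }.

Section Filter.
Variables (R : realType) (n d m p : nat).
Variables (M : lti_model R n d m p) (F : ud_factors R n d p)
          (O : alg1a_mwgs R n d p).
Variables (x : nat -> 'cV[R]_m) (y : nat -> 'cV[R]_d).

Definition Tbar (th : 'rV[R]_p) : 'M[R]_n :=
  mT M th - mS M th *m invmx (mH M th) *m mZ M th.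
Definition Bbar (th : 'rV[R]_p) : 'M[R]_(n, m) :=
  mB M th - mS M th *m invmx (mH M th) *m mbeta M th.
Definition Qbar (th : 'rV[R]_p) : 'M[R]_n :=
  mQ M th - mS M th *m invmx (mH M th) *m (mS M th)^T.

(* pre-arrays (as A, i.e. the transposes of the displayed A^T) *)
Definition timeA (k : nat) (th : 'rV[R]_p) : 'M[R]_(n + n, n) :=
  (row_mx (Tbar th *m UPf O k.-1 th) (UQb F th))^T.
Definition timeDA (k : nat) (th : 'rV[R]_p) : 'M[R]_(n + n) :=
  block_mx (DPf O k.-1 th) 0 0 (DQb F th).
Definition measA (k : nat) (th : 'rV[R]_p) : 'M[R]_(n + d, n + d) :=
  (block_mx (UPp O k th) 0 (mZ M th *m UPp O k th) (UH F th))^T.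
Definition measDA (k : nat) (th : 'rV[R]_p) : 'M[R]_(n + d) :=
  block_mx (DPp O k th) 0 0 (DH F th).
Definition measR (k : nat) (th : 'rV[R]_p) : 'M[R]_(n + d) :=
  block_mx (UPf O k th) (Ku O k th) 0 (URe O k th).
Definition measDR (k : nat) (th : 'rV[R]_p) : 'M[R]_(n + d) :=
  block_mx (DPf O k th) 0 0 (DRe O k th).

Fixpoint alpha_f (k : nat) (th : 'rV[R]_p) : 'cV[R]_n :=
  match k with
  | 0 => malpha0 M th
  | k'.+1 =>
    let ap := Tbar th *m alpha_f k' th + Bbar th *m x k'
              + mS M th *m invmx (mH M th) *m y k' in
    let e := y k'.+1 - mZ M th *m ap - mbeta M th *m x k'.+1 in
    ap + Ku O k'.+1 th *m (invmx (URe O k'.+1 th) *m e)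
  end.

Definition alpha_p (k : nat) (th : 'rV[R]_p) : 'cV[R]_n :=
  Tbar th *m alpha_f k.-1 th + Bbar th *m x k.-1
  + mS M th *m invmx (mH M th) *m y k.-1.
Definition innov (k : nat) (th : 'rV[R]_p) : 'cV[R]_d :=
  y k - mZ M th *m alpha_p k th - mbeta M th *m x k.
Definition innov_bar (k : nat) (th : 'rV[R]_p) : 'cV[R]_d :=
  invmx (URe O k th) *m innov k th.

Record dout := Dout {
  d_alpha_p : 'cV[R]_n; d_UPp : 'M[R]_n; d_DPp : 'M[R]_n;
  d_UPf : 'M[R]_n; d_DPf : 'M[R]_n; d_URe : 'M[R]_d; d_DRe : 'M[R]_d;
  d_Ku : 'M[R]_(n, d); d_ebar : 'cV[R]_d; d_alpha_f : 'cV[R]_n }.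

Variables (i : 'I_p) (th : 'rV[R]_p).

(* one step k >= 1 of Algorithm 1b, given the derivatives
   (d alpha_{k-1|k-1}, d U_{P_{k-1|k-1}}, d D_{P_{k-1|k-1}}) *)
Definition dstep (k : nat) (prev : 'cV[R]_n * 'M[R]_n * 'M[R]_n) : dout :=
  let: (daf, dUf, dDf) := prev in
  let Hi := invmx (mH M th) in
  let dap := pd i Tbar th *m alpha_f k.-1 th + Tbar th *m daf
             + pd i Bbar th *m x k.-1 + pd i (mS M) th *m Hi *m y k.-1
             - mS M th *m Hi *m pd i (mH M) th *m Hi *m y k.-1 in
  let dAt : 'M[R]_(n + n, n) :=
    (row_mx (pd i Tbar th *m UPf O k.-1 th + Tbar th *m dUf)
            (pd i (UQb F) th))^T in
  let dDAt : 'M[R]_(n + n) := block_mx dDf 0 0 (pd i (DQb F) th) in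
  let tu := diffUD (Wt O k th) (UPp O k th) (DPp O k th)
                   (timeDA k th) dAt dDAt in
  let dUp := tu.1 in
  let dDp := tu.2 in
  let dAm : 'M[R]_(n + d, n + d) :=
    (block_mx dUp 0 (pd i (mZ M) th *m UPp O k th + mZ M th *m dUp)
              (pd i (UH F) th))^T in
  let dDAm : 'M[R]_(n + d) := block_mx dDp 0 0 (pd i (DH F) th) in
  let mu := diffUD (Wm O k th) (measR k th) (measDR k th)
                   (measDA k th) dAm dDAm in
  let dUf' := ulsubmx mu.1 in
  let dK := ursubmx mu.1 in
  let dUR := drsubmx mu.1 in
  let dDf' := ulsubmx mu.2 in
  let dDR := drsubmx mu.2 in
  let URi := invmx (URe O k th) in
  let de := - (URi *m dUR *m URi *m innov k th)
            - URi *m (pd i (mZ M) th *m alpha_p k th + mZ M th *m dap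
                      + pd i (mbeta M) th *m x k) in
  let daf' := dap + dK *m innov_bar k th + Ku O k th *m de in
  Dout dap dUp dDp dUf' dDf' dUR dDR dK de daf'.

Fixpoint dstate (k : nat) : 'cV[R]_n * 'M[R]_n * 'M[R]_n :=
  match k with
  | 0 => (pd i (malpha0 M) th, pd i (UPi0 F) th, pd i (DPi0 F) th)
  | k'.+1 => let o := dstep k'.+1 (dstate k') in
             (d_alpha_f o, d_UPf o, d_DPf o)
  end.

Definition alg1b (k : nat) : dout := dstep k (dstate k.-1).

End Filter.

(** Algorithm 1b is Algorithm 1a differentiated step by step, so everything
   except the MWGS steps is the product rule and the rule
   [d(X^-1) = - X^-1 (dX) X^-1]. For an MWGS step, differentiating
   [A^T = R W^T] and [W^T D_A W = D_R] gives
   [dA^T = dR W^T + R dW^T] and [dW^T D_A W + W^T dD_A W + W^T D_A dW = dD_R].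
   Put [N = R^-1 dR], strictly upper triangular because [R] is unit upper
   triangular, and [X = W^T D_A dW]. The first identity becomes
   [M_0 = D_R N^T + X] and the second [X^T + M_2 + X = dD_R], a diagonal
   matrix. Comparing strictly lower, diagonal and strictly upper parts gives
   [L_0^T + U_0 + U_2 = N D_R] and [2 D_0 + D_2 = dD_R], which is the
   Diff. UD scheme. Induction on [k] then propagates exactness from the inputs
   [d alpha_{k-1|k-1}], [dU_{P_{k-1|k-1}}], [dD_{P_{k-1|k-1}}]. *)

From HB Require Import structures.
From mathcomp Require Import all_boot all_order all_algebra.
From mathcomp Require Import all_classical all_reals all_analysis.
From mathcomp Require Import perm ring zify.
Import Order.TTheory GRing.Theory Num.Theory.
Import numFieldNormedType.Exports.
Local Open Scope ring_scope.
Set Implicit Arguments.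
Unset Strict Implicit.
Unset Printing Implicit Defensive.

Section MatrixDerive.
Context {R : realFieldType} {V : normedModType R} (t v : V).

Lemma is_derive_mx a b (f : V -> 'M[R]_(a, b)) (df : 'M[R]_(a, b)) :
  (forall i j, is_derive t v (fun s => f s i j) (df i j)) -> is_derive t v f df.
Proof.
move=> dfij; have fd : derivable f t v by apply/derivable_mxP.
by split=> //; rewrite derive_mx //; apply/matrixP => i j; rewrite mxE derive_val.
Qed.

Lemma is_derive_mx_entry a b (f : V -> 'M[R]_(a, b)) (df : 'M[R]_(a, b)) i j :
  is_derive t v f df -> is_derive t v (fun s => f s i j) (df i j).
Proof.
move=> [fd <-]; have fijd : derivable (fun s => f s i j) t v.
  by move/derivable_mxP: fd.
by split=> //; rewrite derive_mx // mxE.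
Qed.

Lemma is_derive_mulmx a b c (f : V -> 'M[R]_(a, b)) (g : V -> 'M[R]_(b, c)) df dg :
  is_derive t v f df -> is_derive t v g dg ->
  is_derive t v (fun s => f s *m g s) (df *m g t + f t *m dg).
Proof.
move=> fd gd; apply: is_derive_mx => i j; rewrite !mxE -big_split /=.
have -> : (fun s => (f s *m g s) i j) =
    \sum_(k < b) ((fun s => f s i k) * (fun s => g s k j)).
  by apply/funext => s; rewrite mxE fct_sumE.
apply: is_derive_eq.
  by apply: is_derive_sum => k; apply: is_deriveM; apply: is_derive_mx_entry.
by apply: eq_bigr => k _; rewrite addrC; congr (_ + _); exact: mulrC.
Qed.

Lemma is_derive_trmx a b (f : V -> 'M[R]_(a, b)) df :
  is_derive t v f df -> is_derive t v (fun s => (f s)^T) df^T.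
Proof.
move=> fd; apply: is_derive_mx => i j; rewrite mxE.
have -> : (fun s => (f s)^T i j) = (fun s => f s j i) by apply/funext => s; rewrite mxE.
exact: is_derive_mx_entry.
Qed.

Lemma is_derive_row_mx a b c (f : V -> 'M[R]_(a, b)) (g : V -> 'M[R]_(a, c)) df dg :
  is_derive t v f df -> is_derive t v g dg ->
  is_derive t v (fun s => row_mx (f s) (g s)) (row_mx df dg).
Proof.
move=> fd gd; apply: is_derive_mx => i j.
case: (split_ordP j) => k ->; [rewrite row_mxEl | rewrite row_mxEr].
- have -> : (fun s => row_mx (f s) (g s) i (lshift c k)) = (fun s => f s i k).
    by apply/funext => s; rewrite row_mxEl.
  exact: is_derive_mx_entry.
- have -> : (fun s => row_mx (f s) (g s) i (rshift b k)) = (fun s => g s i k).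
    by apply/funext => s; rewrite row_mxEr.
  exact: is_derive_mx_entry.
Qed.

Lemma is_derive_col_mx a b c (f : V -> 'M[R]_(a, c)) (g : V -> 'M[R]_(b, c)) df dg :
  is_derive t v f df -> is_derive t v g dg ->
  is_derive t v (fun s => col_mx (f s) (g s)) (col_mx df dg).
Proof.
move=> fd gd.
have -> : (fun s => col_mx (f s) (g s)) = (fun s => (row_mx (f s)^T (g s)^T)^T).
  by apply/funext => s; rewrite tr_row_mx !trmxK.
rewrite -[col_mx df dg]trmxK tr_col_mx.
by apply/is_derive_trmx/is_derive_row_mx; exact: is_derive_trmx.
Qed.

Lemma is_derive_block_mx a1 a2 b1 b2 (fa : V -> 'M[R]_(a1, b1))
    (fb : V -> 'M[R]_(a1, b2)) (fc : V -> 'M[R]_(a2, b1)) (fd : V -> 'M[R]_(a2, b2))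
    dfa dfb dfc dfd :
  is_derive t v fa dfa -> is_derive t v fb dfb ->
  is_derive t v fc dfc -> is_derive t v fd dfd ->
  is_derive t v (fun s => block_mx (fa s) (fb s) (fc s) (fd s)) (block_mx dfa dfb dfc dfd).
Proof. by move=> *; apply: is_derive_col_mx; apply: is_derive_row_mx. Qed.

Lemma derivable_det k (f : V -> 'M[R]_k) :
  derivable f t v -> derivable (fun s => \det (f s)) t v.
Proof.
move=> fd; have -> : (fun s => \det (f s)) =
    \sum_(σ : 'S_k) ((fun=> (-1) ^+ σ) * \prod_(i < k) (fun s => f s i (σ i))).
  apply/funext => s; rewrite /determinant fct_sumE; apply: eq_bigr => σ _.
  by rewrite /= fct_prodE.
elim/big_ind: _ => [|g h|σ _]; [exact: derivable_cst | exact: derivableD |].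
apply: derivableM; first exact: derivable_cst.
elim/big_ind: _ => [|g h|i _]; [exact: derivable_cst | exact: derivableM |].
by apply/ex_derive/is_derive_mx_entry/derivableP.
Qed.

Lemma derivable_invmx k (f : V -> 'M[R]_k) : (forall s, f s \in unitmx) ->
  derivable f t v -> derivable (fun s => invmx (f s)) t v.
Proof.
move=> fU fd; apply/derivable_mxP => i j.
have -> : (fun s => invmx (f s) i j) = (fun s => (\det (f s))^-1 *
    ((-1) ^+ (j + i) * \det (row' j (col' i (f s))))).
  by apply/funext => s; rewrite /invmx fU !mxE.
apply: derivableM.
  by apply: derivableV; [rewrite -unitfE -unitmxE | exact: derivable_det].
apply: derivableM; first exact: derivable_cst.
apply/derivable_det/derivable_mxP => a b.
have -> : (fun s => row' j (col' i (f s)) a b) = (fun s => f s (lift j a) (lift i b)).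
  by apply/funext => s; rewrite !mxE.
by move/derivable_mxP: fd; apply.
Qed.

Lemma is_derive_invmx k (f : V -> 'M[R]_k) df :
  (forall s, f s \in unitmx) -> is_derive t v f df ->
  is_derive t v (fun s => invmx (f s)) (- (invmx (f t) *m df *m invmx (f t))).
Proof.
move=> fU fd; have /derivableP invd : derivable (fun s => invmx (f s)) t v.
  exact: derivable_invmx.
split=> //; have D1 : 'D_v (fun s => f s *m invmx (f s)) t = 0.
  have -> : (fun s => f s *m invmx (f s)) = cst 1%:M.
    by apply/funext => s; rewrite mulmxV.
  exact: derive_val.
have := @derive_val _ _ _ _ _ _ _ (is_derive_mulmx fd invd).
rewrite /= D1 => /esym/eqP; rewrite addr_eq0 => /eqP/(congr1 (mulmx (invmx (f t)))).
by rewrite mulmxN mulKmx // mulmxA => ->; rewrite opprK.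
Qed.

End MatrixDerive.

(* Registered as [Hint Extern]s rather than instances: an instance pattern
   [fun s : V => ...] does not match functions whose binder is written
   ['rV[R]_p], as in the filter definitions. *)
#[local] Hint Extern 0 (is_derive _ _ (fun _ => _ *m _) _) =>
  notypeclasses refine (is_derive_mulmx _ _) : typeclass_instances.
#[local] Hint Extern 0 (is_derive _ _ (fun _ => _^T) _) =>
  notypeclasses refine (is_derive_trmx _) : typeclass_instances.
#[local] Hint Extern 0 (is_derive _ _ (fun _ => row_mx _ _) _) =>
  notypeclasses refine (is_derive_row_mx _ _) : typeclass_instances.
#[local] Hint Extern 0 (is_derive _ _ (fun _ => block_mx _ _ _ _) _) =>
  notypeclasses refine (is_derive_block_mx _ _ _ _) : typeclass_instances.
#[local] Hint Extern 0 (is_derive _ _ (fun _ => invmx _) _) =>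
  notypeclasses refine (is_derive_invmx _ _) : typeclass_instances.

Lemma diag_trmx (V : nmodType) s (A : 'M[V]_s) : is_diag_mx A -> A^T = A.
Proof. by case/diag_mxP => a ->; rewrite tr_diag_mx. Qed.

Section Triangular.
Variable R : realType.

Definition strictly_upper s (N : 'M[R]_s) : Prop :=
  forall i j : 'I_s, (j <= i)%N -> N i j = 0.

Lemma unit_upper_unitmx s (U : 'M[R]_s) : unit_upper U -> U \in unitmx.
Proof.
move=> [Ulow Udiag]; rewrite unitmxE -det_tr det_trig; last first.
  by apply/is_trig_mxP => i j ij; rewrite mxE Ulow.
by rewrite big1 ?unitr1 // => i _; rewrite mxE Udiag.
Qed.

Lemma unit_upper_drsubmx s1 s2 (U : 'M[R]_(s1 + s2)) :
  unit_upper U -> unit_upper (drsubmx U).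
Proof.
move=> [Ulow Udiag]; split=> [i j ji|i]; rewrite !mxE; last exact: Udiag.
by apply: Ulow; rewrite /= ltn_add2l.
Qed.

Lemma unit_upper_mulmx_strictly_upper s (U N : 'M[R]_s) :
  unit_upper U -> strictly_upper (U *m N) -> strictly_upper N.
Proof.
move=> [Ulow Udiag] UN i j.
(* Descending induction on [i]: [(U N) i j] is [N i j] plus a combination of
   the entries [N l j] with [l > i]. *)
move: {2}(s - i)%N (leqnn (s - i)) => k; elim: k i => [|k IH] i ik ji.
  by rewrite leqn0 subn_eq0 leqNgt ltn_ord in ik.
have := UN i j ji; rewrite mxE (bigD1 i) //= Udiag mul1r big1 ?addr0 // => l l_neq_i.
have [l_lt_i|i_le_l] := ltnP l i; first by rewrite Ulow ?mul0r.
have i_lt_l : (i < l)%N by rewrite ltn_neqAle i_le_l andbT eq_sym val_eqE.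
by rewrite IH ?mulr0 //; lia.
Qed.

Lemma diffUD_solves_linearized_mwgs r s (W dW dA : 'M[R]_(r, s))
    (DA dDA : 'M[R]_r) (U DR dU dDR : 'M[R]_s) :
  is_diag_mx DA -> W^T *m DA *m W = DR ->
  unit_upper U -> is_diag_mx DR -> DR \in unitmx ->
  dA^T = dU *m W^T + U *m dW^T ->
  dW^T *m DA *m W + W^T *m dDA *m W + W^T *m DA *m dW = dDR ->
  strictly_upper dU -> is_diag_mx dDR ->
  diffUD W U DR DA dA dDA = (dU, dDR).
Proof.
move=> DAdiag eDR Uunit DRdiag DRinv edA edDR dUup /is_diag_mxP dDRdiag.
have Uinv := unit_upper_unitmx Uunit.
pose N := invmx U *m dU; pose X := W^T *m DA *m dW.
pose M0 := W^T *m DA *m dA *m invmx U^T; pose M2 := W^T *m dDA *m W.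
have Nup : strictly_upper N.
  by apply: (unit_upper_mulmx_strictly_upper Uunit); rewrite mulKVmx.
have eM0 : M0 = DR *m N^T + X.
  have edA' : dA = W *m dU^T + dW *m U^T.
    by rewrite -[dA]trmxK edA linearD /= !trmx_mul !trmxK.
  rewrite /M0 edA' mulmxDr mulmxDl !mulmxA eDR -[X in _ + X](mulmxA _ U^T).
  by rewrite mulmxV ?unitmx_tr // mulmx1 /N trmx_mul trmx_inv !mulmxA.
have eM2 i j : X j i + M2 i j + X i j = dDR i j.
  have <- : X^T + M2 + X = dDR.
    by rewrite -edDR /X !trmx_mul trmxK diag_trmx // mulmxA.
  by rewrite !mxE.
case/diag_mxP: DRdiag => dr eDRdiag.
have M0E i j : M0 i j = dr 0 i * N j i + X i j.
  by rewrite eM0 eDRdiag mul_diag_mx !mxE.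
rewrite /diffUD -/M0 -/M2; congr pair.
  suff -> : (slow M0)^T + supp M0 + supp M2 = N *m DR.
    by rewrite mulmxA mulmxK // /N mulKVmx.
  clearbody N X M0 M2.
  apply/matrixP => i j; rewrite eDRdiag mul_mx_diag !mxE !M0E.
  case: (ltngtP i j) => ij.
  - rewrite (Nup j i) ?(ltnW ij) // mulr0 add0r -(addr0 (N i j * _)).
    rewrite -(dDRdiag i j); last by rewrite neq_ltn ij.
    by rewrite -eM2; ring.
  - by rewrite Nup ?(ltnW ij) // mul0r !addr0.
  - by rewrite Nup ?ij // mul0r !addr0.
clearbody N X M0 M2; apply/matrixP => i j; rewrite !mxE.
have [<-|ij] := eqVneq i j; last by rewrite !addr0 dDRdiag.
by rewrite M0E Nup // mulr0 add0r -eM2; ring.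
Qed.

End Triangular.

Section MwgsDerive.
Context {R : realType} {V : normedModType R} (t v : V).

Lemma derive_mx_cst_entry a b (f : V -> 'M[R]_(a, b)) i j c :
  (forall u, f u i j = c) -> derivable f t v -> 'D_v f t i j = 0.
Proof.
move=> fc fd; rewrite derive_mx // mxE.
have -> : (fun u => f u i j) = cst c by apply/funext => u; rewrite fc.
exact: derive_cst.
Qed.

Lemma derive_unit_upper_strictly_upper s (U : V -> 'M[R]_s) :
  (forall u, unit_upper (U u)) -> derivable U t v -> strictly_upper ('D_v U t).
Proof.
move=> Uunit Ud i j; rewrite leq_eqVlt => /orP[/eqP/val_inj ->|ji].
  by apply: (derive_mx_cst_entry (c := 1)) => // u; case: (Uunit u).
by apply: (derive_mx_cst_entry (c := 0)) => // u; case: (Uunit u) => Ulow _; exact: Ulow.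
Qed.

Lemma derive_is_diag s (D : V -> 'M[R]_s) :
  (forall u, is_diag_mx (D u)) -> derivable D t v -> is_diag_mx ('D_v D t).
Proof.
move=> Ddiag Dd; apply/is_diag_mxP => i j ij.
by apply: (derive_mx_cst_entry (c := 0)) => // u; move/is_diag_mxP: (Ddiag u); apply.
Qed.

Lemma diffUD_derive_mwgs r s (A W : V -> 'M[R]_(r, s)) (DA : V -> 'M[R]_r)
    (U DR : V -> 'M[R]_s) :
  (forall u, mwgs_spec (A u) (DA u) (W u) (U u) (DR u)) ->
  derivable A t v -> derivable DA t v -> derivable W t v ->
  derivable U t v -> derivable DR t v ->
  diffUD (W t) (U t) (DR t) (DA t) ('D_v A t) ('D_v DA t) = ('D_v U t, 'D_v DR t).
Proof.
move=> mwgs /derivableP dA /derivableP dDA /derivableP dW dU dDR.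
have [[_ DAdiag _] [_ eDR Uunit DRdiag DRinv]] := mwgs t.
have ? := derivableP dU; have ? := derivableP dDR.
apply: (diffUD_solves_linearized_mwgs (dW := 'D_v W t)) => //.
- have -> : ('D_v A t)^T = 'D_v (fun u => (A u)^T) t by rewrite [RHS]derive_val.
  have -> : (fun u => (A u)^T) = (fun u => U u *m (W u)^T).
    by apply/funext => u; case: (mwgs u) => _ [].
  by rewrite [LHS]derive_val.
- have <- : (fun u => (W u)^T *m DA u *m W u) = DR.
    by apply/funext => u; case: (mwgs u) => _ [].
  by rewrite [RHS]derive_val mulmxDl.
- by apply: derive_unit_upper_strictly_upper => // u; case: (mwgs u) => _ [].
- by apply: derive_is_diag => // u; case: (mwgs u) => _ [].
Qed.

End MwgsDerive.

Lemma posdef_unitmx (R : realType) s (P : 'M[R]_s) : posdef P -> P \in unitmx.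
Proof.
move=> [_ Ppos]; rewrite unitmxE unitfE; apply/negP => /det0P [w w_neq0 wP].
have := Ppos w^T; rewrite trmx_eq0 => /(_ w_neq0).
by rewrite trmxK wP mul0mx mxE ltxx.
Qed.

Section Sensitivities.
Variables (R : realType) (n d m p : nat).
Variables (M : lti_model R n d m p) (F : ud_factors R n d p) (O : alg1a_mwgs R n d p).
Variables (x : nat -> 'cV[R]_m) (y : nat -> 'cV[R]_d) (i : 'I_p) (th : 'rV[R]_p).
Local Notation v := (delta_mx 0 i : 'rV[R]_p).

Hypothesis H_unit : forall t, mH M t \in unitmx.
Hypothesis init : forall t, UPf O 0 t = UPi0 F t /\ DPf O 0 t = DPi0 F t.
Hypothesis time_mwgs : forall k t, (0 < k)%N ->
  mwgs_spec (timeA M F O k t) (timeDA F O k t) (Wt O k t) (UPp O k t) (DPp O k t).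
Hypothesis meas_mwgs : forall k t, (0 < k)%N ->
  mwgs_spec (measA M F O k t) (measDA F O k t) (Wm O k t) (measR O k t) (measDR O k t).
Hypotheses (dT : differentiable (mT M) th) (dB : differentiable (mB M) th)
  (dZ : differentiable (mZ M) th) (dbeta : differentiable (mbeta M) th)
  (dS : differentiable (mS M) th) (dH : differentiable (mH M) th)
  (dalpha0 : differentiable (malpha0 M) th).
Hypotheses (dUH : differentiable (UH F) th) (dDH : differentiable (DH F) th)
  (dUQb : differentiable (UQb F) th) (dDQb : differentiable (DQb F) th).
Hypotheses (dUPp : forall k, differentiable (UPp O k) th)
  (dDPp : forall k, differentiable (DPp O k) th)
  (dUPf : forall k, differentiable (UPf O k) th)
  (dDPf : forall k, differentiable (DPf O k) th)
  (dURe : forall k, differentiable (URe O k) th)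
  (dDRe : forall k, differentiable (DRe O k) th)
  (dKu : forall k, differentiable (Ku O k) th)
  (dWt : forall k, differentiable (Wt O k) th)
  (dWm : forall k, differentiable (Wm O k) th).

Lemma URe_unitmx k t : URe O k.+1 t \in unitmx.
Proof.
have [_ [_ _ Runit _ _]] := meas_mwgs t (ltn0Sn k).
by move/unit_upper_drsubmx: Runit; rewrite block_mxKdr => /unit_upper_unitmx.
Qed.

(* Leaves of derivative computations: invertibility of [H] and [U_{R_e}], the
   differentiable model and Algorithm 1a quantities, and the filter quantities
   below, which are made opaque to resolution so that they stay leaves. *)
#[local] Hint Extern 0 (forall _, is_true _) =>
  move=> ? /=; first [exact: H_unit | exact: URe_unitmx] : typeclass_instances.
#[local] Hint Extern 10 (is_derive _ _ _ _) =>
  apply: derivableP; apply: diff_derivable;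
  match goal with H : context [differentiable _ _] |- _ => apply: H end
  : typeclass_instances.

#[local] Typeclasses Opaque Tbar Bbar alpha_f alpha_p innov_bar.

#[local] Instance Tbar_is_derive : is_derive th v (Tbar M) ('D_v (Tbar M) th) | 0.
Proof. by apply: derivableP; rewrite /Tbar. Qed.

#[local] Instance Bbar_is_derive : is_derive th v (Bbar M) ('D_v (Bbar M) th) | 0.
Proof. by apply: derivableP; rewrite /Bbar. Qed.

#[local] Instance alpha_f_is_derive k :
  is_derive th v (alpha_f M O x y k) ('D_v (alpha_f M O x y k) th) | 0.
Proof.
elim: k => [|k IH]; apply: derivableP => /=; first exact: diff_derivable.
exact: ex_derive.
Qed.

#[local] Instance alpha_p_is_derive k :
  is_derive th v (alpha_p M O x y k) ('D_v (alpha_p M O x y k) th) | 0.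
Proof. by apply: derivableP; rewrite /alpha_p; exact: ex_derive. Qed.

#[local] Instance innov_bar_is_derive k :
  is_derive th v (innov_bar M O x y k.+1) ('D_v (innov_bar M O x y k.+1) th) | 0.
Proof. by apply: derivableP; rewrite /innov_bar /innov; exact: ex_derive. Qed.

Lemma pd_alpha_p k : pd i (alpha_p M O x y k.+1) th =
  pd i (Tbar M) th *m alpha_f M O x y k th + Tbar M th *m pd i (alpha_f M O x y k) th
  + pd i (Bbar M) th *m x k + pd i (mS M) th *m invmx (mH M th) *m y k
  - mS M th *m invmx (mH M th) *m pd i (mH M) th *m invmx (mH M th) *m y k.
Proof.
rewrite /pd /alpha_p derive_val /= !mulmx0 !addr0 mulmxN mulmxDl mulNmx !mulmxA.
by rewrite !addrA.
Qed.

Lemma pd_innov_bar k : pd i (innov_bar M O x y k.+1) th =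
  - (invmx (URe O k.+1 th) *m pd i (URe O k.+1) th *m invmx (URe O k.+1 th)
     *m innov M O x y k.+1 th)
  - invmx (URe O k.+1 th) *m (pd i (mZ M) th *m alpha_p M O x y k.+1 th
     + mZ M th *m pd i (alpha_p M O x y k.+1) th + pd i (mbeta M) th *m x k.+1).
Proof.
by rewrite /pd /innov_bar /innov derive_val mulmx0 addr0 sub0r -opprD mulmxN mulNmx.
Qed.

Lemma pd_alpha_f k : pd i (alpha_f M O x y k.+1) th = pd i (alpha_p M O x y k.+1) th
  + pd i (Ku O k.+1) th *m innov_bar M O x y k.+1 th
  + Ku O k.+1 th *m pd i (innov_bar M O x y k.+1) th.
Proof.
have -> : alpha_f M O x y k.+1 =
    (fun t => alpha_p M O x y k.+1 t + Ku O k.+1 t *m innov_bar M O x y k.+1 t) by [].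
by rewrite /pd derive_val addrA.
Qed.

Lemma time_update_sensitivity k :
  diffUD (Wt O k.+1 th) (UPp O k.+1 th) (DPp O k.+1 th) (timeDA F O k.+1 th)
    (row_mx (pd i (Tbar M) th *m UPf O k th + Tbar M th *m pd i (UPf O k) th)
            (pd i (UQb F) th))^T
    (block_mx (pd i (DPf O k) th) 0 0 (pd i (DQb F) th))
  = (pd i (UPp O k.+1) th, pd i (DPp O k.+1) th).
Proof.
have -> : block_mx (pd i (DPf O k) th) 0 0 (pd i (DQb F) th) = pd i (timeDA F O k.+1) th.
  by rewrite /pd /timeDA [RHS]derive_val.
have -> : (row_mx (pd i (Tbar M) th *m UPf O k th + Tbar M th *m pd i (UPf O k) th)
    (pd i (UQb F) th))^T = pd i (timeA M F O k.+1) th.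
  by rewrite /pd /timeA [RHS]derive_val.
apply: diffUD_derive_mwgs => [t|||||]; first exact: time_mwgs.
all: try exact: diff_derivable.
- by rewrite /timeA; exact: ex_derive.
- by rewrite /timeDA; exact: ex_derive.
Qed.

Lemma meas_update_sensitivity k :
  diffUD (Wm O k.+1 th) (measR O k.+1 th) (measDR O k.+1 th) (measDA F O k.+1 th)
    (block_mx (pd i (UPp O k.+1) th) 0
       (pd i (mZ M) th *m UPp O k.+1 th + mZ M th *m pd i (UPp O k.+1) th)
       (pd i (UH F) th))^T
    (block_mx (pd i (DPp O k.+1) th) 0 0 (pd i (DH F) th))
  = (block_mx (pd i (UPf O k.+1) th) (pd i (Ku O k.+1) th) 0 (pd i (URe O k.+1) th),
     block_mx (pd i (DPf O k.+1) th) 0 0 (pd i (DRe O k.+1) th)).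
Proof.
have -> : block_mx (pd i (DPp O k.+1) th) 0 0 (pd i (DH F) th)
    = pd i (measDA F O k.+1) th.
  by rewrite /pd /measDA [RHS]derive_val.
have -> : (block_mx (pd i (UPp O k.+1) th) 0
    (pd i (mZ M) th *m UPp O k.+1 th + mZ M th *m pd i (UPp O k.+1) th)
    (pd i (UH F) th))^T = pd i (measA M F O k.+1) th.
  by rewrite /pd /measA [RHS]derive_val.
have -> : block_mx (pd i (UPf O k.+1) th) (pd i (Ku O k.+1) th) 0 (pd i (URe O k.+1) th)
    = pd i (measR O k.+1) th.
  by rewrite /pd /measR [RHS]derive_val.
have -> : block_mx (pd i (DPf O k.+1) th) 0 0 (pd i (DRe O k.+1) th)
    = pd i (measDR O k.+1) th.
  by rewrite /pd /measDR [RHS]derive_val.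
apply: diffUD_derive_mwgs => [t|||||]; first exact: meas_mwgs.
all: try exact: diff_derivable.
- by rewrite /measA; exact: ex_derive.
- by rewrite /measDA; exact: ex_derive.
- by rewrite /measR; exact: ex_derive.
- by rewrite /measDR; exact: ex_derive.
Qed.

Definition exact_sensitivities k : dout R n d :=
  Dout (pd i (alpha_p M O x y k) th) (pd i (UPp O k) th) (pd i (DPp O k) th)
    (pd i (UPf O k) th) (pd i (DPf O k) th) (pd i (URe O k) th) (pd i (DRe O k) th)
    (pd i (Ku O k) th) (pd i (innov_bar M O x y k) th) (pd i (alpha_f M O x y k) th).

Lemma dstep_exact k :
  dstep M F O x y i th k.+1
    (pd i (alpha_f M O x y k) th, pd i (UPf O k) th, pd i (DPf O k) th)
  = exact_sensitivities k.+1.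
Proof.
rewrite /dstep; cbv beta iota zeta.
rewrite time_update_sensitivity meas_update_sensitivity.
by rewrite !block_mxKul block_mxKur !block_mxKdr -pd_alpha_p -pd_innov_bar -pd_alpha_f.
Qed.

Lemma dstate_exact k : dstate M F O x y i th k =
  (pd i (alpha_f M O x y k) th, pd i (UPf O k) th, pd i (DPf O k) th).
Proof.
elim: k => [|k IH] /=; last by rewrite IH dstep_exact.
have -> : UPf O 0 = UPi0 F by apply/funext => t; case: (init t).
by have -> : DPf O 0 = DPi0 F by apply/funext => t; case: (init t).
Qed.

Lemma alg1b_exact k : alg1b M F O x y i th k.+1 = exact_sensitivities k.+1.
Proof. by rewrite /alg1b dstate_exact dstep_exact. Qed.

End Sensitivities.

Theorem proposition2 (R : realType) (n d m p : nat)
  (M : lti_model R n d m p) (F : ud_factors R n d p) (O : alg1a_mwgs R n d p)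
  (x : nat -> 'cV[R]_m) (y : nat -> 'cV[R]_d) :
  (* model assumptions: Pi0 > 0, H > 0 *)
  (forall th, posdef (mPi0 M th) /\ posdef (mH M th)) ->
  (* UD factorizations of Pi0, H, Qbar *)
  (forall th, udu_factor (mPi0 M th) (UPi0 F th) (DPi0 F th)
           /\ udu_factor (mH M th) (UH F th) (DH F th)
           /\ udu_factor (Qbar M th) (UQb F th) (DQb F th)) ->
  (* Algorithm 1a: initialization *)
  (forall th, UPf O 0 th = UPi0 F th /\ DPf O 0 th = DPi0 F th) ->
  (* Algorithm 1a: time update (MWGS, well defined) *)
  (forall k th, (0 < k)%N ->
     mwgs_spec (timeA M F O k th) (timeDA F O k th)
               (Wt O k th) (UPp O k th) (DPp O k th)) ->
  (* Algorithm 1a: measurement update (MWGS, well defined) *)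
  (forall k th, (0 < k)%N ->
     mwgs_spec (measA M F O k th) (measDA F O k th)
               (Wm O k th) (measR O k th) (measDR O k th)) ->
  (* differentiability in theta of all quantities involved *)
  (forall th,
     [/\ differentiable (mT M) th, differentiable (mB M) th,
         differentiable (mZ M) th, differentiable (mbeta M) th &
         differentiable (mQ M) th] /\
     [/\ differentiable (mS M) th, differentiable (mH M) th,
         differentiable (malpha0 M) th & differentiable (mPi0 M) th] /\
     [/\ differentiable (UPi0 F) th, differentiable (DPi0 F) th &
         differentiable (UH F) th] /\
     [/\ differentiable (DH F) th, differentiable (UQb F) th &
         differentiable (DQb F) th]) ->
  (forall k th,
     [/\ differentiable (UPp O k) th, differentiable (DPp O k) th,
         differentiable (UPf O k) th, differentiable (DPf O k) th &
         differentiable (URe O k) th] /\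
     [/\ differentiable (DRe O k) th, differentiable (Ku O k) th,
         differentiable (Wt O k) th & differentiable (Wm O k) th]) ->
  (* conclusion: Algorithm 1b computes the exact partial derivatives *)
  forall (k : nat) (i : 'I_p) (th : 'rV[R]_p), (0 < k)%N ->
    let o := alg1b M F O x y i th k in
    [/\ d_alpha_p o = pd i (alpha_p M O x y k) th,
        d_UPp o = pd i (UPp O k) th,
        d_DPp o = pd i (DPp O k) th,
        d_UPf o = pd i (UPf O k) th &
        d_DPf o = pd i (DPf O k) th] /\
    [/\ d_URe o = pd i (URe O k) th,
        d_DRe o = pd i (DRe O k) th,
        d_Ku o = pd i (Ku O k) th,
        d_ebar o = pd i (innov_bar M O x y k) th &
        d_alpha_f o = pd i (alpha_f M O x y k) th].
Proof.
move=> posdefs _ init time_mwgs meas_mwgs dmodel dalg [//|k] i th _ o.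
have [[dT dB dZ dbeta _] [[dS dH dalpha0 _] [[_ _ dUH] [dDH dUQb dDQb]]]] :=
  dmodel th.
have H_unit t : mH M t \in unitmx by exact/posdef_unitmx/(posdefs t).2.
rewrite /o alg1b_exact //.
all: by move=> k'; case: (dalg k' th) => [[? ? ? ? ?] [? ? ? ?]].
Qed.
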